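(* Let $T$ be a reduced linear trellis of length $n$. (1) If $S^1,\dots,S^r\le\mathbb{S}(T)$ are subspaces such that $\mathbb{S}_{\mathfrak{s}}(T)=\bigoplus_{i=1}^r\bigl(S^i\cap\mathbb{S}_{\mathfrak{s}}(T)\bigr)$ for every span $\mathfrak{s}$, then $S^i=\mathbb{S}(T(S^i))$ for every $i$, and there is a linear isomorphism $f:T\to\bigotimes_{i=1}^rT(S^i)$ mapping each subtrellis $T(S^i)$ onto the natural copy $0\otimes\cdots\otimes0\otimes T(S^i)\otimes0\otimes\cdots\otimes0$. (2) Conversely, if $T_1,\dots,T_r$ are linear trellises of length $n$ with $\sum_{i=1}^r\dim\mathbb{S}_{(a,0)}(T_i)\le1$ for all $a\in\mathbb{Z}_n$, and $f:T\to\bigotimes_{i=1}^rT_i$ is a linear isomorphism, then for every span $\mathfrak{s}$ $$\mathbb{S}_{\mathfrak{s}}(T)=\bigoplus_{i=1}^r\mathbb{S}_{\mathfrak{s}}\bigl(f^{-1}(0\otimes\cdots\otimes0\otimes T_i\otimes0\otimes\cdots\otimes0)\bigr).$$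
   Context: Let $\mathbb{F}$ be a finite field and $n\ge1$; indices are taken in $\mathbb{Z}_n$. A trellis $T$ of length $n$ over $\mathbb{F}$ consists of pairwise disjoint finite vertex sets $V_i(T)$, $i\in\mathbb{Z}_n$, and edge sets $E_i(T)\subseteq V_i(T)\times\mathbb{F}\times V_{i+1}(T)$; $(v,\alpha,w)\in E_i(T)$ is an edge from $v$ to $w$ with label $\alpha$. Trellises are trim (each vertex has an outgoing and an incoming edge). $T$ is linear if each $V_i(T)$ is an $\mathbb{F}$-vector space and each $E_i(T)$ a subspace. A cycle is a closed path of length $n$ starting in $V_0(T)$, identified with $(\mathbf{v},\boldsymbol{\alpha})\in\prod_iV_i(T)\times\mathbb{F}^n$; $\mathbb{S}(T)$ is the (linear) space of cycles. $T$ is reduced if every edge lies on a cycle. A linear subtrellis $T''\le T$ is a trim subgraph with $V_i(T'')\le V_i(T)$, $E_i(T'')\le E_i(T)$ subspaces; its cycles are cycles of $T$, so $\mathbb{S}(T'')\le\mathbb{S}(T)$. For $S\le\mathbb{S}(T)$, $T(S)$ is the subtrellis of $T$ consisting of all vertices and edges lying on some cycle in $S$. A linear isomorphism $f:T\to T'$ is a family of linear bijections $f_i:V_i(T)\to V_i(T')$ with $(v,\alpha,w)\in E_i(T)\iff(f_i(v),\alpha,f_{i+1}(w))\in E_i(T')$. The product $T\otimes T'$ has $V_i=V_i(T)\times V_i(T')$ and $E_i=\{((v,v'),\alpha+\alpha',(w,w')):(v,\alpha,w)\in E_i(T),(v',\alpha',w')\in E_i(T')\}$; products of several trellises are defined iteratively,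 and $0\otimes\cdots\otimes T_i\otimes\cdots\otimes0$ denotes the linear subtrellis of $\bigotimes_kT_k$ that is the image of $T_i$ under $v\mapsto(0,\dots,0,v,0,\dots,0)$. Spans: for $a\in\mathbb{Z}_n$, $0\le l\le n-1$, $[a,a+l]=\{a,\dots,a+l\}$, $(a,a+l]=[a,a+l]\setminus\{a\}$; $(a,l)$ is a span; also degenerate spans $\emptyset$ and $\mathbb{Z}_n$. A nondegenerate $(a,l)$ is a span of a cycle $(\mathbf{v},\boldsymbol{\alpha})$ if $\{i:v_i\ne0\}\subseteq(a,a+l]$ and $\{i:\alpha_i\ne0\}\subseteq[a,a+l]$; $\emptyset$ is a span only of the zero cycle and $\mathbb{Z}_n$ of every cycle. $\mathbb{S}_{\mathfrak{s}}(T)$ is the subspace of cycles having span $\mathfrak{s}$ (for a subtrellis, its cycles having span $\mathfrak{s}$). *)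

From HB Require Import structures.
From mathcomp Require Import all_boot all_order all_algebra.
Set Implicit Arguments. Unset Strict Implicit. Unset Printing Implicit Defensive.
Import GRing.Theory.
Local Open Scope ring_scope.

Section Trellis.
Variables (F : finFieldType) (n : nat).

(* indices are taken in Z_n, represented by 'I_n; i+1 is the cyclic successor *)
Definition succ (i : 'I_n) : 'I_n := ordS i.

Definition edgeT (vT : vectType F) := ((vT * F^o) * vT)%type.

(* A linear trellis: vertex spaces V_i and edge spaces E_i, all realized as
   subspaces of a common ambient F-vector space vT. *)
Record ltrellis (vT : vectType F) := LTrellis {
  tV : 'I_n -> {vspace vT};
  tE : 'I_n -> {vspace edgeT vT} }.

Section OneTrellis.
Variables (vT : vectType F) (T : ltrellis vT).

Definition wf_trellis : Prop :=
  forall i v a w, (v, a, w) \in tE T i -> v \in tV T i /\ w \in tV T (succ i).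

Definition trim : Prop :=
  (forall i v, v \in tV T i -> exists a w, (v, a, w) \in tE T i) /\
  (forall i w, w \in tV T (succ i) -> exists v a, (v, a, w) \in tE T i).

Definition is_trellis : Prop := wf_trellis /\ trim.

End OneTrellis.

(* the ambient space of cycles (v, alpha) in prod_i V_i x F^n *)
Definition cycT (vT : vectType F) := ({ffun 'I_n -> vT} * {ffun 'I_n -> F^o})%type.

Definition edge_at (vT : vectType F) (i : 'I_n) (c : cycT vT) : edgeT vT :=
  (c.1 i, c.2 i, c.1 (succ i)).

Definition vert_at (vT : vectType F) (i : 'I_n) (c : cycT vT) : vT := c.1 i.

Definition is_cycle (vT : vectType F) (T : ltrellis vT) (c : cycT vT) : Prop :=
  forall i, edge_at i c \in tE T i.

Definition reduced (vT : vectType F) (T : ltrellis vT) : Prop :=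
  forall i e, e \in tE T i -> exists c, is_cycle T c /\ edge_at i c = e.

Definition cycles (vT : vectType F) (T : ltrellis vT) : {vspace cycT vT} :=
  (\bigcap_(i < n) (linfun (@edge_at vT i) @^-1: tE T i))%VS.

Inductive tspan := SpEmpty | SpFull | SpInt of 'I_n & nat.

Definition valid_span (s : tspan) : Prop :=
  match s with SpInt _ l => (l < n)%N | _ => True end.

(* i \in [a, a+l]  and  i \in (a, a+l]  (indices mod n) *)
Definition in_cc (a : 'I_n) (l : nat) (i : 'I_n) : bool :=
  (((i + n - a) %% n) <= l)%N.
Definition in_oc (a : 'I_n) (l : nat) (i : 'I_n) : bool :=
  (0 < (i + n - a) %% n <= l)%N.

Definition has_span (vT : vectType F) (s : tspan) (c : cycT vT) : Prop :=
  match s with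
  | SpEmpty => c = 0
  | SpFull => True
  | SpInt a l => forall i, (c.1 i != 0 -> in_oc a l i) /\ (c.2 i != 0 -> in_cc a l i)
  end.

Definition outside (vT : vectType F) (a : 'I_n) (l : nat) (c : cycT vT) : cycT vT :=
  ([ffun i => if in_oc a l i then 0 else c.1 i],
   [ffun i => if in_cc a l i then 0 else c.2 i]).

Definition spanZ (vT : vectType F) (s : tspan) : {vspace cycT vT} :=
  match s with
  | SpEmpty => 0%VS
  | SpFull => fullv
  | SpInt a l => lker (linfun (@outside vT a l))
  end.

Definition Sspan (vT : vectType F) (s : tspan) (T : ltrellis vT) : {vspace cycT vT} :=
  (cycles T :&: spanZ vT s)%VS.

Definition tsub (vT : vectType F) (T : ltrellis vT) (S : {vspace cycT vT}) : ltrellis vT :=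
  LTrellis (fun i => (linfun (@vert_at vT i) @: S)%VS)
           (fun i => (linfun (@edge_at vT i) @: S)%VS).

Section Product.
Variables (vT : vectType F) (r : nat) (Ts : 'I_r -> ltrellis vT).

Definition combine (e : {ffun 'I_r -> edgeT vT}) : edgeT {ffun 'I_r -> vT} :=
  ([ffun k => (e k).1.1], \sum_(k < r) (e k).1.2, [ffun k => (e k).2]).

Definition prodT : ltrellis {ffun 'I_r -> vT} :=
  LTrellis
    (fun i => \bigcap_(k < r) (linfun (fun x : {ffun 'I_r -> vT} => x k) @^-1: tV (Ts k) i))%VS
    (fun i => linfun combine @:
       (\bigcap_(k < r) (linfun (fun e : {ffun 'I_r -> edgeT vT} => e k) @^-1: tE (Ts k) i)))%VS.

Definition inj_at (k : 'I_r) (v : vT) : {ffun 'I_r -> vT} :=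
  [ffun j => if j == k then v else 0].
Definition injE_at (k : 'I_r) (e : edgeT vT) : edgeT {ffun 'I_r -> vT} :=
  (inj_at k e.1.1, e.1.2, inj_at k e.2).

Definition copyT (k : 'I_r) : ltrellis {ffun 'I_r -> vT} :=
  LTrellis (fun i => (linfun (inj_at k) @: tV (Ts k) i)%VS)
           (fun i => (linfun (injE_at k) @: tE (Ts k) i)%VS).
End Product.

(* linear isomorphisms, given as families of linear maps f_i on the ambient
   spaces whose restrictions to V_i(T) are the bijections V_i(T) -> V_i(T') *)
Section Iso.
Variables (vT wT : vectType F).

Definition edge_map (f : 'I_n -> 'Hom(vT, wT)) (i : 'I_n) (e : edgeT vT) : edgeT wT :=
  (f i e.1.1, e.1.2, f (succ i) e.2).

Definition is_liso (T : ltrellis vT) (T' : ltrellis wT) (f : 'I_n -> 'Hom(vT, wT)) : Prop :=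
  forall i,
    (f i @: tV T i)%VS = tV T' i /\
    {in tV T i &, injective (f i)} /\
    (forall v a w, v \in tV T i -> w \in tV T (succ i) ->
       ((v, a, w) \in tE T i) = ((f i v, a, f (succ i) w) \in tE T' i)).

Definition timage (f : 'I_n -> 'Hom(vT, wT)) (T'' : ltrellis vT) : ltrellis wT :=
  LTrellis (fun i => (f i @: tV T'' i)%VS)
           (fun i => (linfun (edge_map f i) @: tE T'' i)%VS).

Definition tpreim (T : ltrellis vT) (f : 'I_n -> 'Hom(vT, wT)) (T'' : ltrellis wT)
  : ltrellis vT :=
  LTrellis (fun i => (tV T i :&: f i @^-1: tV T'' i)%VS)
           (fun i => (tE T i :&: linfun (edge_map f i) @^-1: tE T'' i)%VS).
End Iso.

Definition same_trellis (vT : vectType F) (T1 T2 : ltrellis vT) : Prop :=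
  forall i, tV T1 i = tV T2 i /\ tE T1 i = tE T2 i.

End Trellis.

(* Sanity facts: the maps wrapped with linfun above are linear, so linfun
   does not alter them; in particular the cycle space is what it should be. *)
Section Linearity.
Variables (F : finFieldType) (n : nat) (vT wT : vectType F).

Fact edge_at_lin i : linear (@edge_at F n vT i).
Proof. by move=> a u v; rewrite /edge_at /= !ffunE. Qed.
Fact vert_at_lin i : linear (@vert_at F n vT i).
Proof. by move=> a u v; rewrite /vert_at /= !ffunE. Qed.
Fact outside_lin a l : linear (@outside F n vT a l).
Proof.
move=> b u v; rewrite /outside /=; congr (_, _); apply/ffunP=> i; rewrite !ffunE;
  by case: ifP; rewrite ?scaler0 ?addr0.
Qed.
Fact proj_lin (r : nat) (k : 'I_r) : linear (fun x : {ffun 'I_r -> vT} => x k).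
Proof. by move=> a u v; rewrite !ffunE. Qed.
Fact combine_lin r : linear (@combine F vT r).
Proof.
move=> a u v; rewrite /combine /=; congr (_, _, _); try (apply/ffunP=> k; rewrite !ffunE //).
by rewrite /= scaler_sumr -big_split; apply: eq_bigr => k _; rewrite !ffunE.
Qed.
Fact inj_at_lin r k : linear (@inj_at F vT r k).
Proof.
by move=> a u v; apply/ffunP=> j; rewrite !ffunE; case: ifP; rewrite ?scaler0 ?addr0.
Qed.
Fact injE_at_lin r k : linear (@injE_at F vT r k).
Proof. by move=> a u v; rewrite /injE_at /= !inj_at_lin. Qed.
Fact edge_map_lin (f : 'I_n -> 'Hom(vT, wT)) i : linear (edge_map f i).
Proof. by move=> a u v; rewrite /edge_map /= !linearP. Qed.

HB.instance Definition _ i :=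
  GRing.isLinear.Build F _ _ _ (@edge_at F n vT i) (edge_at_lin i).

Lemma edge_atE i : linfun (@edge_at F n vT i) =1 @edge_at F n vT i.
Proof. exact: (lfunE (GRing.Linear.clone _ _ _ _ (@edge_at F n vT i) _)). Qed.

Lemma mem_cycles (T : ltrellis n vT) c : c \in cycles T <-> is_cycle T c.
Proof.
split.
  rewrite memvE => /subv_bigcapP cT i.
  by have := cT i isT; rewrite -memvE -memv_preim edge_atE.
move=> cT; rewrite memvE; apply/subv_bigcapP => i _.
by rewrite -memvE -memv_preim edge_atE.
Qed.
End Linearity.

From HB Require Import structures.
From mathcomp Require Import all_boot all_order all_algebra.
From mathcomp Require Import zify.
Set Implicit Arguments. Unset Strict Implicit. Unset Printing Implicit Defensive.
Import GRing.Theory.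
Local Open Scope ring_scope.

(* The span hypotheses of (1) are needed for three kinds of spans only.  The
   full span makes every cycle of T a unique sum of elements of the S^k.  The
   span (i, n-1), whose cycles are those vanishing at vertex i, separates these
   summands at every vertex, so V_i(T) is the direct sum of the vertex spaces of
   the T(S^k) and the isomorphism is the family of the corresponding
   projections.  The span (i+1, n-2) separates the label of an edge with zero
   endpoints, which forces the cycles of T(S^k) back into S^k.
   For (2), pulling back the components of f(c) splits a cycle c of T into
   cycles of the copies of the T_k which vanish wherever c does, and so inherit
   every span of c.  The splitting is unique: on vertices because the f_i are
   injective, and on labels because a nonzero label on an edge with zero
   endpoints is a cycle of span (a,0), which exists in at most one factor. *)

Section LinearMaps.
Variables (F : finFieldType) (n : nat) (vT wT : vectType F).

(* a name for [fun x => x k], to which HB can attach a linear instance *)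
Definition ffun_at (U : vectType F) r (k : 'I_r) (x : {ffun 'I_r -> U}) : U := x k.

HB.instance Definition _ i :=
  GRing.isLinear.Build F _ _ _ (@vert_at F n vT i) (vert_at_lin i).
HB.instance Definition _ a l :=
  GRing.isLinear.Build F _ _ _ (@outside F n vT a l) (outside_lin a l).
HB.instance Definition _ r k :=
  GRing.isLinear.Build F _ _ _ (@inj_at F vT r k) (inj_at_lin k).
HB.instance Definition _ r k :=
  GRing.isLinear.Build F _ _ _ (@injE_at F vT r k) (injE_at_lin k).
HB.instance Definition _ (f : 'I_n -> 'Hom(vT, wT)) i :=
  GRing.isLinear.Build F _ _ _ (@edge_map F n vT wT f i) (edge_map_lin f i).
HB.instance Definition _ r :=
  GRing.isLinear.Build F _ _ _ (@combine F vT r) (@combine_lin F vT r).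
HB.instance Definition _ r k :=
  GRing.isLinear.Build F _ _ _ (@ffun_at vT r k) (proj_lin k).

Lemma vert_atE i : linfun (@vert_at F n vT i) =1 @vert_at F n vT i.
Proof. exact: (lfunE (GRing.Linear.clone _ _ _ _ (@vert_at F n vT i) _)). Qed.
Lemma outsideE a l : linfun (@outside F n vT a l) =1 @outside F n vT a l.
Proof. exact: (lfunE (GRing.Linear.clone _ _ _ _ (@outside F n vT a l) _)). Qed.
Lemma inj_atE r k : linfun (@inj_at F vT r k) =1 @inj_at F vT r k.
Proof. exact: (lfunE (GRing.Linear.clone _ _ _ _ (@inj_at F vT r k) _)). Qed.
Lemma injE_atE r k : linfun (@injE_at F vT r k) =1 @injE_at F vT r k.
Proof. exact: (lfunE (GRing.Linear.clone _ _ _ _ (@injE_at F vT r k) _)). Qed.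
Lemma edge_mapE f i : linfun (@edge_map F n vT wT f i) =1 @edge_map F n vT wT f i.
Proof. exact: (lfunE (GRing.Linear.clone _ _ _ _ (@edge_map F n vT wT f i) _)). Qed.
Lemma combineE r : linfun (@combine F vT r) =1 @combine F vT r.
Proof. exact: (lfunE (GRing.Linear.clone _ _ _ _ (@combine F vT r) _)). Qed.
Lemma ffun_atE r k : linfun (fun x : {ffun 'I_r -> vT} => x k) =1 (fun x => x k).
Proof. exact: (lfunE (GRing.Linear.clone _ _ _ _ (@ffun_at vT r k) _)). Qed.

End LinearMaps.

Lemma memv_bigcapP (K : fieldType) (aT : vectType K) (I : finType) (Us : I -> {vspace aT}) v :
  reflect (forall i, v \in Us i) (v \in \bigcap_(i : I) Us i)%VS.
Proof.
rewrite memvE; apply: (iffP subv_bigcapP) => vU i => [|_].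
  by rewrite memvE vU.
by rewrite -memvE vU.
Qed.

Lemma fst_sum (A B : zmodType) (I : finType) (g : I -> (A * B)%type) :
  (\sum_i g i).1 = \sum_i (g i).1.
Proof. exact: (big_morph fst). Qed.
Lemma snd_sum (A B : zmodType) (I : finType) (g : I -> (A * B)%type) :
  (\sum_i g i).2 = \sum_i (g i).2.
Proof. exact: (big_morph snd). Qed.

Section InjAt.
Variables (F : finFieldType) (vT : vectType F) (r : nat).
Implicit Types (k j : 'I_r) (x : vT).

Lemma inj_at_id k x : inj_at k x k = x.
Proof. by rewrite ffunE eqxx. Qed.

Lemma inj_at_ne k j x : j != k -> inj_at k x j = 0.
Proof. by rewrite ffunE => /negPf ->. Qed.

Lemma inj_at0 k : inj_at k (0 : vT) = 0.
Proof. exact: linear0. Qed.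

Lemma sum_inj_at (y : {ffun 'I_r -> vT}) : \sum_k inj_at k (y k) = y.
Proof.
apply/ffunP => j; rewrite sum_ffunE (bigD1 j) //= big1 ?addr0 ?inj_at_id // => k kj.
by rewrite inj_at_ne // eq_sym.
Qed.

Lemma sum_inj_at_eq0 (g : 'I_r -> {ffun 'I_r -> vT}) :
  (forall k, exists x, g k = inj_at k x) -> \sum_k g k = 0 -> forall k, g k = 0.
Proof.
move=> gk g0 k; have [x gx] := gk k.
have : (\sum_k g k) k = 0 by rewrite g0 ffunE.
rewrite sum_ffunE (bigD1 k) //= big1 ?addr0 => [|j jk].
  by rewrite gx inj_at_id => ->; exact: inj_at0.
by have [y ->] := gk j; rewrite inj_at_ne // eq_sym.
Qed.

Lemma combine_delta k (e : edgeT vT) :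
  combine [ffun j => if j == k then e else 0] = injE_at k e.
Proof.
rewrite /combine /injE_at; congr (_, _, _).
- by apply/ffunP => j; rewrite !ffunE; case: eqP.
- rewrite (bigD1 k) //= big1 ?addr0 => [|j /negPf jk]; by rewrite ffunE ?eqxx ?jk.
- by apply/ffunP => j; rewrite !ffunE; case: eqP.
Qed.

End InjAt.

Section CyclicIntervals.
Variable n : nat.
Implicit Types a i j : 'I_n.

Lemma cyc_distE a j : ((j + n - a) %% n = if (a <= j)%N then j - a else j + n - a)%N.
Proof.
have an := ltn_ord a; have jn := ltn_ord j; case: (leqP a j) => aj.
  by rewrite (_ : j + n - a = j - a + n)%N ?modnDr ?modn_small; lia.
by rewrite modn_small; lia.
Qed.

Lemma val_succ i : val (succ i) = (if i.+1 == n then 0 else i.+1)%N.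
Proof.
rewrite /succ /=; case: eqP => [->|Si]; first by rewrite modnn.
by rewrite modn_small //; have := ltn_ord i; lia.
Qed.

Lemma in_cc_full a j : in_cc a n.-1 j.
Proof.
by rewrite /in_cc cyc_distE; have := ltn_ord a; have := ltn_ord j; case: (leqP a j); lia.
Qed.

Lemma in_oc_full a j : in_oc a n.-1 j = (j != a).
Proof.
rewrite /in_oc cyc_distE; have := ltn_ord a; have := ltn_ord j.
by case: (leqP a j) => *; apply/idP/idP; rewrite -val_eqE /=; lia.
Qed.

Lemma in_cc_gap i j : (1 < n)%N -> in_cc (succ i) (n - 2) j = (j != i).
Proof.
move=> n1; rewrite /in_cc cyc_distE; have := ltn_ord i; have := ltn_ord j.
have Si : (i.+1 %% n = if i.+1 == n then 0 else i.+1)%N := val_succ i.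
case: (leqP (succ i) j) => /= h1 h2 h3; rewrite Si in h1 *;
  by apply/idP/idP; rewrite -val_eqE /=; case: eqP h1 => Sn h1; lia.
Qed.

Lemma in_oc_gap i j : (1 < n)%N -> j != i -> j != succ i -> in_oc (succ i) (n - 2) j.
Proof.
move=> n1; rewrite /in_oc cyc_distE -!val_eqE /=; have := ltn_ord i; have := ltn_ord j.
have Si : (i.+1 %% n = if i.+1 == n then 0 else i.+1)%N := val_succ i.
case: (leqP (succ i) j) => /= h1 h2 h3 h4 h5; rewrite Si in h1 h5 *;
  by case: eqP h1 h5 => Sn h1 h5; lia.
Qed.

Lemma in_cc_self i : in_cc i 0 i.
Proof. by rewrite /in_cc cyc_distE leqnn subnn. Qed.

Lemma in_oc_cc a l j : in_oc a l j -> in_cc a l j.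
Proof. rewrite /in_oc /in_cc; lia. Qed.

Lemma in_oc_succ_cc a l j : in_oc a l (succ j) -> in_cc a l j.
Proof.
rewrite /in_oc /in_cc !cyc_distE; have := ltn_ord a; have := ltn_ord j.
have Sj : (j.+1 %% n = if j.+1 == n then 0 else j.+1)%N := val_succ j.
by case: (leqP a j); case: (leqP a (succ j)) => /=; rewrite Sj; case: eqP; lia.
Qed.

End CyclicIntervals.

Lemma mem_spanZ (F : finFieldType) (n : nat) (vT : vectType F) a l (c : cycT n vT) :
  c \in spanZ vT (SpInt a l) <->
  forall j, (~~ in_oc a l j -> c.1 j = 0) /\ (~~ in_cc a l j -> c.2 j = 0).
Proof.
rewrite /spanZ memv_ker outsideE; split.
  move/eqP=> c0 j; have := congr1 (fun x : cycT n vT => x.1 j) c0.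
  have := congr1 (fun x : cycT n vT => x.2 j) c0; rewrite /= !ffunE.
  by case: (in_oc a l j); case: (in_cc a l j).
move=> cj; apply/eqP; congr (_, _); apply/ffunP => j; rewrite !ffunE; have [c1 c2] := cj j.
  by case: ifP => // /negbT /c1.
by case: ifP => // /negbT /c2.
Qed.

Section Dominated.
Variables (F : finFieldType) (n : nat) (vT wT : vectType F).

Definition dominated (z : cycT n wT) (c : cycT n vT) : Prop :=
  forall i, (c.1 i = 0 -> z.1 i = 0) /\ (edge_at i c = 0 -> z.2 i = 0).

Lemma spanZ_dominated s (z : cycT n wT) (c : cycT n vT) :
  dominated z c -> c \in spanZ vT s -> z \in spanZ wT s.
Proof.
move=> zc; case: s => [|| a l]; last 1 first.
- move/mem_spanZ=> cs; apply/mem_spanZ => j; split=> js.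
    by apply: (zc j).1; apply: (cs j).1.
  apply: (zc j).2; rewrite /edge_at (cs j).2 // (cs j).1 ?(cs (succ j)).1 //.
    by apply: contra js; apply: in_oc_succ_cc.
  by apply: contra js; apply: in_oc_cc.
- rewrite !memv0 => /eqP c0; apply/eqP.
  apply: injective_projections; apply/ffunP => i; rewrite ffunE.
    by apply: (zc i).1; rewrite c0 ffunE.
  by apply: (zc i).2; rewrite c0 /edge_at !ffunE.
- by rewrite !memvf.
Qed.

End Dominated.

Section ProductTrellis.
Variables (F : finFieldType) (n : nat) (vT : vectType F) (r : nat).
Variable Ts : 'I_r -> ltrellis n vT.

Lemma mem_prodT_vert i (w : {ffun 'I_r -> vT}) :
  w \in tV (prodT Ts) i <-> forall k, w k \in tV (Ts k) i.
Proof.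
by split=> [/memv_bigcapP wk k | wk]; [move: (wk k) | apply/memv_bigcapP => k];
  rewrite -memv_preim ffun_atE.
Qed.

Lemma mem_prodT_edge i (e : {ffun 'I_r -> edgeT vT}) :
  (forall k, e k \in tE (Ts k) i) -> combine e \in tE (prodT Ts) i.
Proof.
move=> ek; rewrite /= -combineE; apply: memv_img; apply/memv_bigcapP => k.
by rewrite -memv_preim ffun_atE.
Qed.

Lemma mem_prodT_edgeP i (e' : edgeT {ffun 'I_r -> vT}) :
  e' \in tE (prodT Ts) i ->
  exists2 e : {ffun 'I_r -> edgeT vT}, (forall k, e k \in tE (Ts k) i) & e' = combine e.
Proof.
move=> /memv_imgP[e /memv_bigcapP ek ->]; exists e; last by rewrite combineE.
by move=> k; have := ek k; rewrite -memv_preim ffun_atE.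
Qed.

End ProductTrellis.

Section Converse.
Variables (F : finFieldType) (n : nat) (vT wT : vectType F) (T : ltrellis n vT).
Variables (r : nat) (Ts : 'I_r -> ltrellis n wT) (f : 'I_n -> 'Hom(vT, {ffun 'I_r -> wT})).
Hypothesis wfT : wf_trellis T.
Hypothesis fiso : is_liso T (prodT Ts) f.

Local Notation Tk k := (tpreim T f (copyT Ts k)).

Lemma mem_tpreim_copy_edge k i e :
  e \in tE (Tk k) i <->
  e \in tE T i /\ exists2 x, x \in tE (Ts k) i & edge_map f i e = injE_at k x.
Proof.
rewrite /= memv_cap -memv_preim edge_mapE; split.
  by move=> /andP[eE /memv_imgP[x xE ->]]; split=> //; exists x; rewrite ?injE_atE.
by move=> [-> [x xE ->]]; rewrite -injE_atE memv_img.
Qed.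

Lemma cycles_tpreim_copy k : (cycles (Tk k) <= cycles T)%VS.
Proof.
apply/subvP => c /mem_cycles ck; apply/mem_cycles => i.
by have /mem_tpreim_copy_edge[] := ck i.
Qed.

Lemma copy_edge_tpreim k i u u' (x : edgeT wT) :
  u \in tV T i -> u' \in tV T (succ i) -> x \in tE (Ts k) i ->
  f i u = inj_at k x.1.1 -> f (succ i) u' = inj_at k x.2 ->
  (u, x.1.2, u') \in tE (Tk k) i.
Proof.
move=> uV u'V xE fu fu'; apply/mem_tpreim_copy_edge; split; last first.
  by exists x; rewrite // /edge_map /= fu fu'.
have [_ [_ ->]] := fiso i; rewrite // fu fu'.
rewrite -[(inj_at k _, _, _)]/(injE_at k x) -combine_delta; apply: mem_prodT_edge => j.
by rewrite ffunE; case: eqP => [->|_]; [exact: xE | exact: mem0v].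
Qed.

Lemma liso_vert_component i k v : v \in tV T i ->
  exists u, u \in tV T i /\ f i u = inj_at k (f i v k).
Proof.
move=> vV; have [fV _] := fiso i.
have : inj_at k (f i v k) \in tV (prodT Ts) i.
  apply/mem_prodT_vert => j; rewrite ffunE; case: eqP => [->|_]; last exact: mem0v.
  by have := memv_img (f i) vV; rewrite fV => /mem_prodT_vert; apply.
by rewrite -fV => /memv_imgP[u uV ->]; exists u.
Qed.

Lemma liso_vert_split i v : v \in tV T i ->
  exists u : 'I_r -> vT, [/\ forall k, u k \in tV T i,
    forall k, f i (u k) = inj_at k (f i v k), \sum_k u k = v & v = 0 -> forall k, u k = 0].
Proof.
move=> vV; have [_ [finj _]] := fiso i.
have [u uP] := fin_all_exists (fun k => liso_vert_component k vV).
have uV k : u k \in tV T i by case: (uP k).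
have fu k : f i (u k) = inj_at k (f i v k) by case: (uP k).
exists u; split=> // [|v0 k].
  apply: finj => //; first by apply: rpred_sum => k _.
  by rewrite linear_sum -[RHS]sum_inj_at; apply: eq_bigr => k _; apply: fu.
by apply: finj; rewrite ?mem0v // fu v0 !linear0 ffunE inj_at0.
Qed.

Lemma liso_edge_split i v a w : (v, a, w) \in tE T i ->
  exists e : {ffun 'I_r -> edgeT wT}, (forall k, e k \in tE (Ts k) i) /\
    combine e = (f i v, a, f (succ i) w).
Proof.
move=> vaw; have [vV wV] := wfT vaw; have [_ [_ fE]] := fiso i.
by move: vaw; rewrite fE // => /mem_prodT_edgeP[e ek ->]; exists e.
Qed.

Lemma cycle_decomposition c : c \in cycles T ->
  exists2 z : 'I_r -> cycT n vT,
    forall k, z k \in cycles (Tk k) /\ dominated (z k) c & c = \sum_k z k.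
Proof.
move=> /mem_cycles cT; have cV i : c.1 i \in tV T i by have [] := wfT (cT i).
have [U UP] := fin_all_exists (fun i => liso_vert_split (cV i)).
have [E EP] := fin_all_exists (fun i => liso_edge_split (cT i)).
(* the labels of [E i k] need not vanish on a zero edge of [c]; use 0 there *)
pose x i k : edgeT wT := if edge_at i c == 0 then 0 else E i k.
pose z k : cycT n vT := ([ffun i => U i k], [ffun i => (x i k).1.2]).
have xE i k : x i k \in tE (Ts k) i.
  by rewrite /x; case: eqP => _; [exact: mem0v | exact: (EP i).1].
have fUx i k : f i (U i k) = inj_at k (x i k).1.1 /\ f (succ i) (U (succ i) k) = inj_at k (x i k).2.
  have [_ fU _ _] := UP i; have [_ fU' _ _] := UP (succ i).
  rewrite fU fU' /x; case: eqP => [[-> _ ->]|_]; first by split; rewrite linear0 ffunE.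
  have cE := (EP i).2; split; congr inj_at.
    by have := congr1 (fun y : edgeT {ffun 'I_r -> wT} => y.1.1 k) cE; rewrite /= ffunE.
  by have := congr1 (fun y : edgeT {ffun 'I_r -> wT} => y.2 k) cE; rewrite /= ffunE.
exists z => [k|].
  split=> [|i]; last first.
    split=> [c0|c0]; rewrite ffunE; first by case: (UP i) => _ _ _ ->.
    by rewrite /x c0 eqxx.
  apply/mem_cycles => i; rewrite /edge_at /= !ffunE.
  have [UV _ _ _] := UP i; have [UV' _ _ _] := UP (succ i).
  by apply: copy_edge_tpreim; rewrite ?UV ?UV' ?xE ?(fUx i k).1 ?(fUx i k).2.
apply: injective_projections; apply/ffunP => i; rewrite ?fst_sum ?snd_sum sum_ffunE.
  by case: (UP i) => _ _ <- _; apply: eq_bigr => k _; rewrite ffunE.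
under eq_bigr => k _ do rewrite ffunE /x.
case: eqP => [[_ -> _]|_]; first by rewrite big1.
by have := congr1 (fun y : edgeT {ffun 'I_r -> wT} => y.1.2) (EP i).2.
Qed.

Lemma copy_vertices_independent (z : 'I_r -> cycT n vT) :
  (forall k, z k \in cycles (Tk k)) -> \sum_k z k = 0 -> forall k i, (z k).1 i = 0.
Proof.
move=> zk z0 k i; have [_ [finj _]] := fiso i.
have fzk j : exists y, f i ((z j).1 i) = inj_at j y.
  have /mem_cycles/(_ i)/mem_tpreim_copy_edge[_ [y _ [fz _ _]]] := zk j.
  by exists y.1.1.
have fz0 : \sum_j f i ((z j).1 i) = 0.
  by rewrite -linear_sum -sum_ffunE -fst_sum z0 ffunE linear0.
apply: finj; [| exact: mem0v | by rewrite linear0 (sum_inj_at_eq0 fzk fz0)].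
by have /mem_cycles/(_ i)/mem_tpreim_copy_edge[/wfT[]] := zk k.
Qed.

Lemma label_edge_Sspan_dim k i (al : F) :
  al != 0 -> ((0, al, 0) : edgeT wT) \in tE (Ts k) i ->
  (0 < \dim (Sspan (SpInt i 0) (Ts k)))%N.
Proof.
move=> al0 loopE; rewrite lt0n dimv_eq0; apply: contra_neq al0 => S0.
pose d : cycT n wT := (0, [ffun j => if j == i then al else 0]).
have : d \in Sspan (SpInt i 0) (Ts k).
  rewrite memv_cap; apply/andP; split.
    apply/mem_cycles => j; rewrite /edge_at /= !ffunE.
    by case: eqP => [->|_]; [exact: loopE | exact: mem0v].
  apply/mem_spanZ => j; rewrite !ffunE; split=> //.
  by case: eqP => // ->; rewrite in_cc_self.
rewrite S0 memv0 => /eqP/(congr1 (fun y : cycT n wT => y.2 i)).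
by rewrite /= !ffunE eqxx.
Qed.

Hypothesis label_cycles_dim : forall a : 'I_n,
  (\sum_(k < r) \dim (Sspan (SpInt a 0) (Ts k)) <= 1)%N.

Lemma label_edges_eq0 i (al : 'I_r -> F) :
  (forall k, ((0, al k, 0) : edgeT wT) \in tE (Ts k) i) -> \sum_k al k = 0 ->
  forall k, al k = 0.
Proof.
move=> loopE al0 k; apply/eqP/negPn/negP => alk.
have alj j : j != k -> al j = 0.
  move=> jk; apply/eqP/negPn/negP => alj.
  have := label_cycles_dim i; rewrite (bigD1 k) //= (bigD1 j) //=.
  by have := label_edge_Sspan_dim alk (loopE k); have := label_edge_Sspan_dim alj (loopE j); lia.
by move: al0 alk; rewrite (bigD1 k) //= big1 ?addr0 => [->|j /alj]; rewrite ?eqxx.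
Qed.

Lemma copy_cycles_independent (z : 'I_r -> cycT n vT) :
  (forall k, z k \in cycles (Tk k)) -> \sum_k z k = 0 -> forall k, z k = 0.
Proof.
move=> zk z0; have z1 := copy_vertices_independent zk z0.
have z2 i : forall k, (z k).2 i = 0.
  apply: (@label_edges_eq0 i); last by rewrite -sum_ffunE -snd_sum z0 ffunE.
  move=> k; have /mem_cycles/(_ i)/mem_tpreim_copy_edge[_ [x xE]] := zk k.
  rewrite /edge_map /edge_at /injE_at /= !z1 !linear0.
  case: x xE => [[x1 x2] x3] xE [x10 -> x30].
  have x1_0 : x1 = 0 by rewrite -(inj_at_id k x1) -x10 ffunE.
  have x3_0 : x3 = 0 by rewrite -(inj_at_id k x3) -x30 ffunE.
  by rewrite x1_0 x3_0 in xE.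
by move=> k; apply: injective_projections; apply/ffunP => i; rewrite ffunE.
Qed.

Lemma Sspan_tpreim_copy s :
  Sspan s T = (\sum_(k < r) Sspan s (Tk k))%VS /\
  directv (\sum_(k < r) Sspan s (Tk k))%VS.
Proof.
have SkT k : (Sspan s (Tk k) <= cycles (Tk k))%VS by exact: capvSl.
split.
  apply/eqP; rewrite eqEsubv; apply/andP; split.
    apply/subvP => c /memv_capP[cT cs]; have [z zk ->] := cycle_decomposition cT.
    apply: memv_sumr => k _; rewrite memv_cap (zk k).1.
    exact: spanZ_dominated (zk k).2 cs.
  by apply/subv_sumP => k _; apply: capvS (cycles_tpreim_copy k) (subvv _).
apply/directv_sum_independent => z zk z0 k _.
by apply: copy_cycles_independent z0 k => j; apply: subvP (SkT j) _ (zk j isT).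
Qed.

End Converse.

Section Forward.
Variables (F : finFieldType) (n : nat) (vT : vectType F) (T : ltrellis n vT).
Variables (r : nat) (S : 'I_r -> {vspace cycT n vT}).
Hypothesis trellisT : is_trellis T.
Hypothesis reducedT : reduced T.
Hypothesis S_cycles : forall k, (S k <= cycles T)%VS.
Hypothesis S_Sspan : forall s : tspan n, valid_span s ->
  Sspan s T = (\sum_(k < r) (S k :&: Sspan s T))%VS /\
  directv (\sum_(k < r) (S k :&: Sspan s T))%VS.

Lemma S_cycle k c : c \in S k -> is_cycle T c.
Proof. by move=> cS; apply/mem_cycles; apply: subvP (S_cycles k) _ cS. Qed.

Lemma cycles_sumS c : c \in cycles T ->
  exists2 x : 'I_r -> cycT n vT, (forall k, x k \in S k) & c = \sum_k x k.
Proof.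
move=> cT; have : c \in Sspan (SpFull n) T by rewrite memv_cap cT memvf.
rewrite (S_Sspan (s := SpFull n) I).1 => /memv_sumP[x xS ->]; exists x => // k.
by have /memv_capP[] := xS k isT.
Qed.

Lemma sumS_eq0 (x : 'I_r -> cycT n vT) :
  (forall k, x k \in S k) -> \sum_k x k = 0 -> forall k, x k = 0.
Proof.
move=> xS x0 k; have /directv_sum_independent Sdir := (S_Sspan (s := SpFull n) I).2.
apply: Sdir x0 k isT => j _.
by rewrite memv_cap xS memv_cap memvf andbT; apply/mem_cycles/S_cycle/xS.
Qed.

Lemma sumS_spanZ s (x : 'I_r -> cycT n vT) : valid_span s -> (forall k, x k \in S k) ->
  \sum_k x k \in spanZ vT s -> forall k, x k \in spanZ vT s.
Proof.
move=> vs xS xs k.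
have : \sum_k x k \in Sspan s T.
  by rewrite memv_cap xs andbT; apply: rpred_sum => j _; apply/mem_cycles/S_cycle/xS.
rewrite (S_Sspan vs).1 => /memv_sumP[y yS xy].
have yk j : y j \in S j /\ y j \in Sspan s T by have /memv_capP[] := yS j isT.
suff -> : x k = y k by have /memv_capP[] := (yk k).2.
apply/eqP; rewrite -subr_eq0; apply/eqP; move: k; apply: sumS_eq0.
  by move=> j; rewrite memvB ?xS ?(yk j).1.
by rewrite sumrB xy subrr.
Qed.

Lemma sumS_vert_eq0 (x : 'I_r -> cycT n vT) i : (forall k, x k \in S k) ->
  (\sum_k x k).1 i = 0 -> forall k, (x k).1 i = 0.
Proof.
move=> xS x0 k.
have vs : valid_span (SpInt i n.-1) by rewrite /=; have := ltn_ord i; lia.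
have xs : \sum_k x k \in spanZ vT (SpInt i n.-1).
  by apply/mem_spanZ => j; rewrite in_oc_full in_cc_full negbK; split=> // /eqP ->.
by have /mem_spanZ/(_ i)[-> //] := sumS_spanZ vs xS xs k; rewrite in_oc_full eqxx.
Qed.

Lemma sumS_label_eq0 (x : 'I_r -> cycT n vT) i : (forall k, x k \in S k) ->
  edge_at i (\sum_k x k) = 0 -> forall k, (x k).2 i = 0.
Proof.
move=> xS [x0 l0 x0'] k; have [n1|n1] := leqP n 1.
  (* with a single position, the edge is the whole cycle *)
  have j_i (j : 'I_n) : j = i by apply: ord_inj; have := ltn_ord j; have := ltn_ord i; lia.
  suff x_0 : \sum_k x k = 0 by rewrite (sumS_eq0 xS x_0) ffunE.
  by apply: injective_projections; apply/ffunP => j; rewrite (j_i j) ffunE.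
have vs : valid_span (SpInt (succ i) (n - 2)) by rewrite /=; lia.
have xs : \sum_k x k \in spanZ vT (SpInt (succ i) (n - 2)).
  apply/mem_spanZ => j; split; last by rewrite in_cc_gap // negbK => /eqP ->.
  have [->|ji] := eqVneq j i; first by [].
  have [->|jSi] := eqVneq j (succ i); first by [].
  by rewrite in_oc_gap.
by have /mem_spanZ/(_ i)[_ -> //] := sumS_spanZ vs xS xs k; rewrite in_cc_gap // eqxx.
Qed.

Lemma sumS_dominated (x : 'I_r -> cycT n vT) : (forall k, x k \in S k) ->
  forall k, dominated (x k) (\sum_k x k).
Proof.
move=> xS k i; split; first by move/sumS_vert_eq0; apply.
by move/sumS_label_eq0; apply.
Qed.

Local Notation W i k := (tV (tsub T (S k)) i).

Definition vproj i : 'I_r -> 'End(vT) := sumv_pi_for (erefl (\sum_(k < r) W i k)%VS).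

Definition fS i : 'Hom(vT, {ffun 'I_r -> vT}) :=
  (\sum_(k < r) (linfun (@inj_at F vT r k) \o vproj i k))%VF.

Lemma fS_apply i v k : fS i v k = vproj i k v.
Proof.
rewrite sum_lfunE sum_ffunE (bigD1 k) //= big1 ?addr0 => [|j jk];
  by rewrite comp_lfunE inj_atE ?inj_at_id ?inj_at_ne // eq_sym.
Qed.

Lemma mem_tsub_vert i k v : v \in W i k <-> exists2 c, c \in S k & v = c.1 i.
Proof.
split; first by move/memv_imgP=> [c cS ->]; exists c; rewrite ?vert_atE.
by move=> [c cS ->]; rewrite -[c.1 i]/(vert_at i c) -vert_atE memv_img.
Qed.

Lemma tsub_vert_sub i k v : v \in W i k -> v \in tV T i.
Proof. by move/mem_tsub_vert=> [c /S_cycle cT ->]; have [] := trellisT.1 _ _ _ _ (cT i). Qed.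

Lemma vert_sum_tsub i v : v \in tV T i -> v \in (\sum_(k < r) W i k)%VS.
Proof.
move=> vV; have [a [w vaw]] := trellisT.2.1 _ _ vV.
have [c [/mem_cycles cT cvaw]] := reducedT vaw; have [x xS cx] := cycles_sumS cT.
have -> : v = \sum_k (x k).1 i by case: cvaw => <- _ _; rewrite cx fst_sum sum_ffunE.
by apply: memv_sumr => k _; apply/mem_tsub_vert; exists (x k).
Qed.

Lemma vproj_sum i v : v \in tV T i -> \sum_k vproj i k v = v.
Proof. by move/vert_sum_tsub; apply: sumv_pi_sum. Qed.

Lemma vproj_sumS i (x : 'I_r -> cycT n vT) : (forall k, x k \in S k) ->
  forall k, vproj i k (\sum_j (x j).1 i) = (x k).1 i.
Proof.
move=> xS k; set v := \sum_j (x j).1 i.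
have [D DS] : exists D : 'I_r -> cycT n vT, forall j, D j \in S j /\ vproj i j v = (D j).1 i.
  suff DS j : exists d, d \in S j /\ vproj i j v = d.1 i by exact: fin_all_exists DS.
  have := memv_sum_pi (erefl (\sum_(k < r) W i k)%VS) j v.
  by move/mem_tsub_vert=> [d dS ->]; exists d.
have xDS j : x j - D j \in S j by rewrite memvB ?xS ?(DS j).1.
have xD0 : (\sum_j (x j - D j)).1 i = 0.
  have vV : v \in tV T i.
    by apply: rpred_sum => j _; apply/(@tsub_vert_sub i j)/mem_tsub_vert; exists (x j).
  rewrite sumrB /= !ffunE !fst_sum !sum_ffunE -/v -{1}(vproj_sum vV).
  by under eq_bigr => j _ do rewrite (DS j).2; rewrite subrr.
have := sumS_vert_eq0 xDS xD0 k; rewrite /= !ffunE => /eqP; rewrite subr_eq0 => /eqP ->.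
by rewrite (DS k).2.
Qed.

Lemma vproj_S i k c : c \in S k ->
  forall j, vproj i j (c.1 i) = if j == k then c.1 i else 0.
Proof.
move=> cS j; pose x m : cycT n vT := if m == k then c else 0.
have xS m : x m \in S m by rewrite /x; case: eqP => [->|_]; [exact: cS | exact: mem0v].
have cx : c.1 i = \sum_m (x m).1 i.
  by rewrite (bigD1 k) //= big1 ?addr0 => [|m /negPf mk]; rewrite /x ?eqxx ?mk ?ffunE.
by rewrite {1}cx vproj_sumS // /x; case: (j == k); rewrite ?ffunE.
Qed.

Lemma cycles_tsub k : cycles (tsub T (S k)) = S k.
Proof.
apply/vspaceP => c; apply/idP/idP => [/mem_cycles cTk|cS]; last first.
  by apply/mem_cycles => i /=; rewrite -edge_atE memv_img.
have [D DS] : exists D : 'I_n -> cycT n vT,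
    forall i, D i \in S k /\ edge_at i c = edge_at i (D i).
  suff DS i : exists d, d \in S k /\ edge_at i c = edge_at i d by exact: fin_all_exists DS.
  by have /memv_imgP[d dS] := cTk i; rewrite edge_atE; exists d.
have cT : c \in cycles T.
  by apply/mem_cycles => i; rewrite (DS i).2; apply: S_cycle (DS i).1 i.
have [x xS cx] := cycles_sumS cT.
suff x0 j : j != k -> x j = 0 by rewrite cx (bigD1 k) //= big1 ?addr0.
move=> jk; suff xj0 i : (x j).1 i = 0 /\ (x j).2 i = 0.
  by apply: injective_projections; apply/ffunP => i; rewrite ffunE; case: (xj0 i).
pose y m := x m - (if m == k then D i else 0).
have yS m : y m \in S m.
  by rewrite memvB ?xS //; case: eqP => [->|_]; [exact: (DS i).1 | exact: mem0v].
have y0 : edge_at i (\sum_m y m) = 0.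
  rewrite sumrB -cx (bigD1 k) //= eqxx big1 ?addr0 => [|m /negPf -> //].
  by rewrite linearB /= (DS i).2 subrr.
have [yv yl] := sumS_dominated yS j i.
by rewrite -[x j](_ : y j = _) ?yv ?yl //; [case: y0 | rewrite /y (negPf jk) subr0].
Qed.

Local Notation TS := (prodT (fun k => tsub T (S k))).

Lemma fS_sumS i (x : 'I_r -> cycT n vT) : (forall k, x k \in S k) ->
  fS i (\sum_k (x k).1 i) = [ffun k => (x k).1 i].
Proof. by move=> xS; apply/ffunP => k; rewrite fS_apply vproj_sumS ?ffunE. Qed.

Lemma fS_vert i : (fS i @: tV T i)%VS = tV TS i.
Proof.
apply/vspaceP => y; apply/idP/idP.
  move/memv_imgP=> [v vV ->]; apply/mem_prodT_vert => k; rewrite fS_apply.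
  exact: memv_sum_pi.
move/mem_prodT_vert => yk.
have [X XS] : exists X : 'I_r -> cycT n vT, forall k, X k \in S k /\ y k = (X k).1 i.
  suff XS k : exists c, c \in S k /\ y k = c.1 i by exact: fin_all_exists XS.
  by have /mem_tsub_vert[c cS ->] := yk k; exists c.
have -> : y = fS i (\sum_k (X k).1 i).
  by rewrite fS_sumS => [|k]; [apply/ffunP => k; rewrite ffunE (XS k).2 | exact: (XS k).1].
apply: memv_img; apply: rpred_sum => k _; apply: (@tsub_vert_sub i k).
by apply/mem_tsub_vert; exists (X k); first exact: (XS k).1.
Qed.

Lemma fS_inj i : {in tV T i &, injective (fS i)}.
Proof.
move=> u v uV vV fuv; apply/eqP; rewrite -subr_eq0; apply/eqP.
rewrite -(vproj_sum (memvB uV vV)) big1 // => k _.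
by rewrite linearB /= -!fS_apply fuv subrr.
Qed.

Lemma fS_edge i v a w : v \in tV T i -> w \in tV T (succ i) ->
  ((v, a, w) \in tE T i) = ((fS i v, a, fS (succ i) w) \in tE TS i).
Proof.
move=> vV wV; apply/idP/idP => [vaw | /mem_prodT_edgeP[e ek]].
  have [c [/mem_cycles cT cvaw]] := reducedT vaw; have [x xS cx] := cycles_sumS cT.
  move: cvaw; rewrite cx /edge_at !fst_sum snd_sum !sum_ffunE => -[<- <- <-].
  rewrite !fS_sumS //; set e := [ffun k => edge_at i (x k)].
  have -> : ([ffun k => (x k).1 i], \sum_k (x k).2 i, [ffun k => (x k).1 (succ i)]) = combine e.
    by congr (_, _, _); [apply/ffunP => k | apply: eq_bigr => k _ | apply/ffunP => k];
      rewrite !ffunE.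
  by apply: mem_prodT_edge => k; rewrite ffunE /= -edge_atE memv_img.
rewrite /combine => -[fv ea fw].
have [D DS] : exists D : 'I_r -> cycT n vT, forall k, D k \in S k /\ e k = edge_at i (D k).
  suff DS k : exists d, d \in S k /\ e k = edge_at i d by exact: fin_all_exists DS.
  by have /memv_imgP[d dS ->] := ek k; exists d; rewrite edge_atE.
have DT : \sum_k D k \in cycles T by apply: rpred_sum => k _; apply/mem_cycles/S_cycle/(DS k).1.
suff -> : (v, a, w) = edge_at i (\sum_k D k) by move/mem_cycles: DT; apply.
rewrite /edge_at fst_sum snd_sum !sum_ffunE ea; congr (_, _, _).
- by rewrite -[LHS](vproj_sum vV); apply: eq_bigr => k _; rewrite -fS_apply fv ffunE (DS k).2.
- by apply: eq_bigr => k _; rewrite (DS k).2.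
- by rewrite -[LHS](vproj_sum wV); apply: eq_bigr => k _; rewrite -fS_apply fw ffunE (DS k).2.
Qed.

Lemma fS_copy k : same_trellis (timage fS (tsub T (S k))) (copyT (fun k => tsub T (S k)) k).
Proof.
move=> i; split=> /=.
  apply: eq_in_limg => v /mem_tsub_vert[c cS ->]; rewrite inj_atE.
  by apply/ffunP => j; rewrite fS_apply (vproj_S i cS) ffunE.
apply: eq_in_limg => e /memv_imgP[c cS ->]; rewrite edge_atE edge_mapE injE_atE.
by congr (_, _, _); apply/ffunP => j; rewrite fS_apply (vproj_S _ cS) ffunE.
Qed.

End Forward.

Unset Implicit Arguments.

Theorem mainTheorem4 (F : finFieldType) (n : nat) (vT : vectType F)
    (T : ltrellis n vT) :
  (0 < n)%N -> is_trellis T -> reduced T ->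
  (* (1) *)
  (forall (r : nat) (S : 'I_r -> {vspace cycT n vT}),
     (forall k, (S k <= cycles T)%VS) ->
     (forall s : tspan n, valid_span s ->
        Sspan s T = (\sum_(k < r) (S k :&: Sspan s T))%VS /\
        directv (\sum_(k < r) (S k :&: Sspan s T))%VS) ->
     (forall k, cycles (tsub T (S k)) = S k) /\
     exists f : 'I_n -> 'Hom(vT, {ffun 'I_r -> vT}),
       is_liso T (prodT (fun k => tsub T (S k))) f /\
       forall k, same_trellis (timage f (tsub T (S k)))
                              (copyT (fun k => tsub T (S k)) k)) /\
  (* (2) *)
  (forall (wT : vectType F) (r : nat) (Ts : 'I_r -> ltrellis n wT)
          (f : 'I_n -> 'Hom(vT, {ffun 'I_r -> wT})),
     (forall k, is_trellis (Ts k)) ->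
     (forall a : 'I_n, (\sum_(k < r) \dim (Sspan (SpInt a 0) (Ts k)) <= 1)%N) ->
     is_liso T (prodT Ts) f ->
     forall s : tspan n, valid_span s ->
       Sspan s T = (\sum_(k < r) Sspan s (tpreim T f (copyT Ts k)))%VS /\
       directv (\sum_(k < r) Sspan s (tpreim T f (copyT Ts k)))%VS).
Proof.
move=> _ trellisT reducedT; split=> [r S S_cycles S_Sspan | wT r Ts f _ label_dim fiso s _].
  split=> [k|]; first exact: cycles_tsub.
  exists (fS T S); split=> [i|k]; last exact: fS_copy.
  by split; [exact: fS_vert | split; [exact: fS_inj | exact: fS_edge]].
exact: Sspan_tpreim_copy trellisT.1 fiso label_dim s.
Qed.
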